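(* Let $u$ be a 5-complex number with $0<\theta_+<\pi/2$ and $0<\psi_1<\pi/2$. Then $$u=\rho\exp\left\{\frac15(h_1+h_2+h_3+h_4)\ln\frac{\sqrt2}{\tan\theta_+}+\left[\frac{\sqrt5+1}{10}(h_1+h_4)-\frac{\sqrt5-1}{10}(h_2+h_3)\right]\ln\tan\psi_1+\tilde e_1\phi_1+\tilde e_2\phi_2\right\},$$ where the exponential of a 5-complex number $w$ is $\exp w=\sum_{n\ge0}w^n/n!$.
   Context: A 5-complex number is $u=x_0+h_1x_1+h_2x_2+h_3x_3+h_4x_4$ with real $x_j$, with componentwise addition and the commutative associative bilinear multiplication determined by $h_jh_k=h_{(j+k)\bmod 5}$, $h_0=1$. Canonical variables: $v_+=\sum_{j=0}^4x_j$ and, for $k=1,2$, $v_k=\sum_j x_j\cos(2\pi kj/5)$, $\tilde v_k=\sum_jx_j\sin(2\pi kj/5)$. For $k=1,2$: $\rho_k^2=v_k^2+\tilde v_k^2$ ($\rho_k\ge0$), $\phi_k\in[0,2\pi)$ with $\cos\phi_k=v_k/\rho_k$, $\sin\phi_k=\tilde v_k/\rho_k$. Planar angle $\psi_1\in[0,\pi/2]$: $\tan\psi_1=\rho_1/\rho_2$. Polar angle $\theta_+\in[0,\pi]$: $\tan\theta_+=\sqrt2\rho_1/v_+$. Amplitude $\rho=(v_+\rho_1^2\rho_2^2)^{1/5}$. Canonical basis elements (with $h_0=1$): $\tilde e_k=\frac25\sum_{j=0}^4\sin(2\pi kj/5)\,h_j$ for $k=1,2$. *)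

From HB Require Import structures.
From mathcomp Require Import all_boot all_order all_algebra.
From mathcomp Require Import all_classical all_reals all_analysis.
Set Implicit Arguments. Unset Strict Implicit. Unset Printing Implicit Defensive.
Import Order.TTheory GRing.Theory Num.Theory numFieldNormedType.Exports.
Local Open Scope ring_scope.

Section FiveComplex.
Variable R : realType.

(* A 5-complex number u = x_0 + h_1 x_1 + ... + h_4 x_4 is the row vector
   of its real components (x_0,...,x_4). *)
Definition C5 := 'rV[R]_5.

Definition h5 (j : nat) : C5 := \row_(k < 5) (if (k : nat) == (j %% 5)%N then 1 else 0).

Definition mul5 (u v : C5) : C5 :=
  \sum_(i < 5) \sum_(j < 5) (u 0 i * v 0 j) *: h5 (i + j)%N.

Fixpoint pow5 (w : C5) (n : nat) : C5 :=
  match n with O => h5 0 | S m => mul5 w (pow5 w m) end.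

Definition exp5_partial (w : C5) (N : nat) : C5 :=
  \sum_(n < N) (n`!%:R)^-1 *: pow5 w n.

Definition exp5 (w : C5) : C5 :=
  \row_(k < 5) limn (fun N : nat => (exp5_partial w N 0 k : R^o)).

Definition vplus (u : C5) : R := \sum_(j < 5) u 0 j.
Definition vk (k : nat) (u : C5) : R :=
  \sum_(j < 5) u 0 j * cos (2 * pi * (k * j)%N%:R / 5).
Definition vtk (k : nat) (u : C5) : R :=
  \sum_(j < 5) u 0 j * sin (2 * pi * (k * j)%N%:R / 5).
Definition rhok (k : nat) (u : C5) : R := Num.sqrt (vk k u ^+ 2 + vtk k u ^+ 2).
Definition rho5 (u : C5) : R :=
  powR (vplus u * rhok 1 u ^+ 2 * rhok 2 u ^+ 2) (5%:R^-1).

Definition etilde (k : nat) : C5 :=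
  \sum_(j < 5) (2 / 5 * sin (2 * pi * (k * j)%N%:R / 5)) *: h5 j.

End FiveComplex.

From HB Require Import structures.
From mathcomp Require Import all_boot all_order all_algebra.
From mathcomp Require Import all_classical all_reals all_analysis.
From mathcomp Require Import complex ring lra zify.
Import Order.TTheory GRing.Theory Num.Theory numFieldNormedType.Exports.
Local Open Scope classical_set_scope.
Local Open Scope ring_scope.

Set Implicit Arguments. Unset Strict Implicit. Unset Printing Implicit Defensive.

(* With zeta = exp (2 i pi / 5), the maps v |-> sum_j v_j zeta^(k j), k < 5,
   are ring morphisms from the 5-complex numbers to C which together determine
   v (discrete Fourier inversion) and commute with the exponential series, so
   exp w is the 5-complex number whose k-th transform is the complex
   exponential of the k-th transform of w.  The transforms of the exponent of
   the theorem are 4 A + 2 L / 5, - A + 2 L / 5 + i phi_1 and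
   - A - 3 L / 5 + i phi_2, where A = ln (sqrt 2 / tan theta_+) / 5 and
   L = ln (tan psi_1), while those of u are v_+, rho_1 e^(i phi_1) and
   rho_2 e^(i phi_2); the amplitude rho = (v_+ rho_1^2 rho_2^2)^(1/5) makes
   the moduli agree.  The indices k = 3, 4 follow by complex conjugation.
   Convergence of the complex exponential series reduces, by a Cauchy
   product, to that of the real exponential, cosine and sine series. *)

Section CauchyProduct.
Variable R : realType.
Implicit Types f g F G : nat -> R.

Definition cauchy_series f g N :=
  \sum_(0 <= n < N) \sum_(0 <= i < n.+1) f i * g (n - i)%N.

Definition cauchy_defect f g N :=
  \sum_(0 <= i < N) \sum_(N - i <= j < N) f i * g j.

Lemma sum_triangle (h : nat -> nat -> R) N :
  \sum_(0 <= n < N) \sum_(0 <= i < n.+1) h i (n - i)%N =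
  \sum_(0 <= i < N) \sum_(0 <= j < N - i) h i j.
Proof.
elim: N => [|N IH]; first by rewrite !big_geq.
rewrite big_nat_recr // IH /=.
have -> : \sum_(0 <= i < N.+1) \sum_(0 <= j < N.+1 - i) h i j =
    \sum_(0 <= i < N.+1) (\sum_(0 <= j < N - i) h i j + h i (N - i)%N).
  by apply: eq_big_nat => i /andP[_ le_iN]; rewrite subSn // big_nat_recr.
rewrite big_split /=; congr (_ + _).
by rewrite [RHS]big_nat_recr //= subnn [X in _ = _ + X]big_geq // addr0.
Qed.

Lemma seriesM_cauchy f g N :
  series f N * series g N = cauchy_series f g N + cauchy_defect f g N.
Proof.
rewrite /series /= /cauchy_series /cauchy_defect (sum_triangle (fun i j => f i * g j)).
rewrite -big_split /= big_distrl /=; apply: eq_big_nat => i _.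
by rewrite big_distrr /= -big_cat_nat // leq_subr.
Qed.

Lemma norm_cauchy_defect_le f g F G N :
  (forall i, `|f i| <= F i) -> (forall i, `|g i| <= G i) ->
  `|cauchy_defect f g N| <= cauchy_defect F G N.
Proof.
move=> fF gG; apply: le_trans (ler_norm_sum _ _ _) _; apply: ler_sum => i _.
apply: le_trans (ler_norm_sum _ _ _) _; apply: ler_sum => j _.
by rewrite normrM ler_pM.
Qed.

(* Mertens' theorem in dominated form: convergence of the Cauchy product of
   the dominating series is assumed; for exponential series it is the
   binomial theorem. *)
Lemma cvg_cauchy_series_dominated f g F G (lf lg lF lG : R) :
  (forall i, `|f i| <= F i) -> (forall i, `|g i| <= G i) ->
  series f @ \oo --> lf -> series g @ \oo --> lg ->
  series F @ \oo --> lF -> series G @ \oo --> lG ->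
  cauchy_series F G @ \oo --> lF * lG ->
  cauchy_series f g @ \oo --> lf * lg.
Proof.
move=> fF gG cvg_f cvg_g cvg_F cvg_G cvg_FG.
have cauchyE f' g' : cauchy_series f' g' =
    (fun N => series f' N * series g' N - cauchy_defect f' g' N).
  by apply/funext => N; rewrite seriesM_cauchy addrK.
have defectFG : cauchy_defect F G @ \oo --> 0.
  have -> : cauchy_defect F G =
      (fun N => series F N * series G N - cauchy_series F G N).
    by apply/funext => N; rewrite seriesM_cauchy addrC addKr.
  by rewrite -(subrr (lF * lG)); apply: cvgB => //; apply: cvgM.
have defectfg : cauchy_defect f g @ \oo --> 0.
  apply: (@squeeze_cvgr _ _ _ _ (- cauchy_defect F G) (cauchy_defect F G)) => //.
    by near=> N; rewrite -ler_norml norm_cauchy_defect_le.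
  by rewrite -oppr0; apply: cvgN.
by rewrite cauchyE -(subr0 (lf * lg)); apply: cvgB => //; apply: cvgM.
Unshelve. all: by end_near.
Qed.

End CauchyProduct.

Lemma exprDn_fact (A : comNzRingType) (R : numFieldType) (phi : {rmorphism R -> A})
    (x y : A) n :
  phi (n`!%:R^-1) * (y + x) ^+ n =
  \sum_(i < n.+1) (phi (i`!%:R^-1) * x ^+ i) * (phi ((n - i)`!%:R^-1) * y ^+ (n - i)).
Proof.
rewrite exprDn big_distrr /=; apply: eq_bigr => -[i /= lt_in] _.
have le_in : (i <= n)%N by [].
have binE : (n`!%:R^-1 * 'C(n, i)%:R : R) = i`!%:R^-1 * (n - i)`!%:R^-1.
  have nat_neq0 k : (0 < k)%N -> (k%:R : R) != 0 by rewrite pnatr_eq0 -lt0n.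
  rewrite -(bin_fact le_in) !natrM; field.
  by rewrite !nat_neq0 ?bin_gt0 ?fact_gt0.
transitivity (phi (n`!%:R^-1 * 'C(n, i)%:R) * (x ^+ i * y ^+ (n - i))).
  by rewrite rmorphM rmorph_nat -mulr_natr; ring.
by rewrite binE rmorphM; ring.
Qed.

Local Open Scope complex_scope.

Section ComplexExponential.
Variable R : realType.
Notation Re := (@complex.Re R).
Notation Im := (@complex.Im R).
Implicit Types (a b : R) (z : R[i]).

Definition cexp z : R[i] :=
  (expR (Re z) * cos (Im z)) +i* (expR (Re z) * sin (Im z)).

Definition cexp_series z N : R[i] := \sum_(n < N) (n`!%:R^-1)%:C * z ^+ n.

Lemma conjc_cexp z : (cexp z)^* = cexp z^*.
Proof. by case: z => a b; rewrite /cexp /= cosN sinN mulrN. Qed.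

Lemma Re_realM a z : Re (a%:C * z) = a * Re z.
Proof. by case: z => x y /=; ring. Qed.

Lemma Im_realM a z : Im (a%:C * z) = a * Im z.
Proof. by case: z => x y /=; ring. Qed.

Lemma Re_mul (x y : R[i]) : Re (x * y) = Re x * Re y - Im x * Im y.
Proof. by case: x => a b; case: y. Qed.

Lemma exprX2_i m : ('i : R[i]) ^+ m.*2 = ((-1) ^+ m)%:C.
Proof.
rewrite -mul2n exprM (_ : 'i ^+ 2 = (-1)%:C) ?rmorphXn //.
by apply/eqP; rewrite eq_complex /=; apply/andP; split; apply/eqP; ring.
Qed.

Lemma exp_coeff_iE b n :
  (n`!%:R^-1)%:C * (0 +i* b) ^+ n = cos_coeff b n +i* sin_coeff b n.
Proof.
have -> : 0 +i* b = 'i * b%:C.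
  by apply/eqP; rewrite eq_complex /=; apply/andP; split; apply/eqP; ring.
rewrite exprMn -rmorphXn /cos_coeff /sin_coeff /=.
rewrite -(odd_double_half n); case: (odd n); move: n./2 => m /=;
  rewrite ?add0n ?add1n ?odd_double /= ?doubleK -?exprnP ?exprS exprX2_i;
  by apply/eqP; rewrite eq_complex /=; apply/andP; split; apply/eqP; ring.
Qed.

Lemma norm_exp_coeff a n : `|exp_coeff a n| = exp_coeff `|a| n.
Proof. by rewrite /exp_coeff /= normrM normfV normrX normr_nat. Qed.

Lemma cvg_series_exp_coeff a : series (exp_coeff a) @ \oo --> expR a.
Proof. exact: is_cvg_series_exp_coeff. Qed.

Lemma cauchy_series_exp_coeff a b :
  cauchy_series (exp_coeff a) (exp_coeff b) = series (exp_coeff (b + a)).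
Proof.
apply/funext => N; apply: eq_big_nat => n _.
rewrite /exp_coeff /= mulrC (exprDn_fact idfun a b) /= big_mkord.
by apply: eq_bigr => i _; rewrite ![_ ^+ _ * _]mulrC.
Qed.

Lemma cvg_cauchy_series_exp (f : nat -> R) b a (l : R) :
  (forall i, `|f i| <= exp_coeff `|b| i) -> series f @ \oo --> l ->
  cauchy_series f (exp_coeff a) @ \oo --> l * expR a.
Proof.
move=> fb cvg_f.
have exp_coeff_le i : `|exp_coeff a i| <= exp_coeff `|a| i by rewrite norm_exp_coeff.
apply: (cvg_cauchy_series_dominated fb exp_coeff_le cvg_f
  (cvg_series_exp_coeff (a := a)) (cvg_series_exp_coeff (a := `|b|))
  (cvg_series_exp_coeff (a := `|a|))).
by rewrite cauchy_series_exp_coeff -expRD addrC; exact: cvg_series_exp_coeff.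
Qed.

Lemma cexp_seriesE a b :
  [/\ Re \o cexp_series (a +i* b) = cauchy_series (cos_coeff b) (exp_coeff a)
    & Im \o cexp_series (a +i* b) = cauchy_series (sin_coeff b) (exp_coeff a)].
Proof.
have termE n : (n`!%:R^-1)%:C * (a +i* b) ^+ n =
    \sum_(i < n.+1) (cos_coeff b i +i* sin_coeff b i) * (exp_coeff a (n - i)%N)%:C.
  have -> : a +i* b = a%:C + (0 +i* b).
    by apply/eqP; rewrite eq_complex /=; apply/andP; split; apply/eqP; ring.
  rewrite (exprDn_fact (real_complex R) (0 +i* b) a%:C n).
  apply: eq_bigr => i _; rewrite exp_coeff_iE; congr (_ * _).
  by rewrite /exp_coeff /= -rmorphXn -rmorphM mulrC.
split; apply/funext => N; rewrite /= /cexp_series /cauchy_series big_mkord raddf_sum;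
  apply: eq_bigr => n _; rewrite termE raddf_sum big_mkord;
  by apply: eq_bigr => i _ /=; rewrite mulr0 ?subr0 ?add0r.
Qed.

Lemma cvg_cexp_series z :
  Re \o cexp_series z @ \oo --> Re (cexp z) /\ Im \o cexp_series z @ \oo --> Im (cexp z).
Proof.
have trig_coeff_le (s x : R) i :
    `|s| <= 1 -> `|s * x ^+ i / i`!%:R| <= exp_coeff `|x| i.
  move=> s_le1; rewrite -mulrA normrM -[_ / _]/(exp_coeff x i) norm_exp_coeff.
  by rewrite ler_piMl // exp_coeff_ge0.
have sign_le (c : bool) m : `|c%:R * (-1) ^+ m : R| <= 1.
  by rewrite normrM normrX normrN normr1 expr1n mulr1; case: c; rewrite ?normr1 ?normr0.
case: z => a b; have [-> ->] := cexp_seriesE a b.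
rewrite /cexp /= [_ * cos _]mulrC [_ * sin _]mulrC.
split; apply: (cvg_cauchy_series_exp (b := b)).
- by move=> i; apply: trig_coeff_le; apply: sign_le.
- by rewrite unlock; exact: is_cvg_series_cos_coeff.
- by move=> i; apply: trig_coeff_le; apply: sign_le.
- by rewrite unlock; exact: is_cvg_series_sin_coeff.
Qed.

Lemma cexp_polar (rho r a p : R) : rho != 0 -> rho * expR a = r ->
  rho^-1%:C * ((r * cos p) +i* (r * sin p)) = cexp (a +i* p).
Proof.
move=> rho_neq0 <-; rewrite /cexp /=.
by apply/eqP; rewrite eq_complex /=; apply/andP; split; apply/eqP; field.
Qed.

End ComplexExponential.

Section FifthRoots.
Variable R : realType.
Notation Re := (@complex.Re R).
Notation Im := (@complex.Im R).

Definition angle5 (n : nat) : R := 2 * pi * n%:R / 5.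

Local Notation c1 := (cos (angle5 1)).
Local Notation s1 := (sin (angle5 1)).
Local Notation c2 := (cos (angle5 2)).
Local Notation s2 := (sin (angle5 2)).

Definition zeta : R[i] := c1 +i* s1.

Lemma zetaX n : zeta ^+ n = cos (angle5 n) +i* sin (angle5 n).
Proof.
elim: n => [|n IH]; first by rewrite expr0 /angle5 mulr0 mul0r cos0 sin0.
rewrite exprSr IH (_ : angle5 n.+1 = angle5 n + angle5 1); last first.
  by rewrite /angle5 -addn1 natrD; ring.
rewrite cosD sinD /zeta.
by apply/eqP; rewrite eq_complex /=; apply/andP; split; apply/eqP; ring.
Qed.

Lemma zeta5 : zeta ^+ 5 = 1.
Proof.
by rewrite zetaX (_ : angle5 5 = pi *+ 2) ?cos2pi ?sin2pi // /angle5 -mulr_natr; field.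
Qed.

Lemma zetaX_mod n : zeta ^+ n = zeta ^+ (n %% 5).
Proof. by rewrite {1}(divn_eq n 5) exprD mulnC exprM zeta5 expr1n mul1r. Qed.

Lemma conjc_zetaX n : (zeta ^+ n)^* = zeta ^+ (4 * n).
Proof.
have zetaXV : zeta ^+ n * zeta ^+ (4 * n) = 1.
  by rewrite -exprD -{1}[n]mul1n -mulnDl exprM zeta5 expr1n.
have zetaXJ : zeta ^+ n * (zeta ^+ n)^* = 1.
  rewrite zetaX /=; have := cos2Dsin2 (angle5 n).
  by move=> norm1; apply/eqP; rewrite eq_complex /= -norm1; apply/andP; split; apply/eqP; ring.
by rewrite -[LHS]mulr1 -zetaXV mulrA [_^* * _]mulrC zetaXJ mul1r.
Qed.

(* cos (2 pi n / 5) and sin (2 pi n / 5), folded by the symmetry n -> 5 - n. *)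
Definition cos5 (n : nat) : R :=
  match (n %% 5)%N with 0 => 1 | 1 => c1 | 2 => c2 | 3 => c2 | _ => c1 end.
Definition sin5 (n : nat) : R :=
  match (n %% 5)%N with 0 => 0 | 1 => s1 | 2 => s2 | 3 => - s2 | _ => - s1 end.

Lemma zetaXE n : zeta ^+ n = cos5 n +i* sin5 n.
Proof.
have zetaXN k : (k <= 5)%N -> zeta ^+ (5 - k) = (zeta ^+ k)^*.
  by move=> k_le5; rewrite conjc_zetaX zetaX_mod [in RHS]zetaX_mod; congr (_ ^+ _); lia.
rewrite zetaX_mod /cos5 /sin5; have : (n %% 5 < 5)%N by rewrite ltn_pmod.
case: (n %% 5)%N => [|[|[|[|[|r]]]]] //= _; rewrite ?expr0 //.
- by rewrite zetaX.
- by rewrite (zetaXN 2%N) // zetaX.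
- by rewrite (zetaXN 1%N) // zetaX.
Qed.

Lemma sin_angle5 n : sin (angle5 n) = sin5 n.
Proof. by have := congr1 Im (zetaXE n); rewrite zetaX. Qed.

Lemma s1_gt0 : 0 < s1.
Proof. by apply: sin_gt0_pi; rewrite /angle5; have := pi_gt0 R; lra. Qed.

Lemma s2_gt0 : 0 < s2.
Proof. by apply: sin_gt0_pi; rewrite /angle5; have := pi_gt0 R; lra. Qed.

Lemma c1_gt0 : 0 < c1.
Proof. by apply: cos_gt0_pihalf; rewrite /angle5; have := pi_gt0 R; lra. Qed.

Lemma sum_zetaX d :
  \sum_(k < 5) zeta ^+ (d * k) = if (d %% 5 == 0)%N then 5%:R else 0.
Proof.
have geometric z : z ^+ 5 = 1 -> Im z != 0 -> \sum_(k < 5) z ^+ k = 0.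
  move=> z5 Imz; have : (z - 1) * \sum_(k < 5) z ^+ k = 0.
    rewrite !big_ord_recr big_ord0 /=.
    by apply: eq_trans (_ : z ^+ 5 - 1 = 0); [ring | rewrite z5 subrr].
  move/eqP; rewrite mulf_eq0 subr_eq0 => /orP[/eqP z1|/eqP //].
  by move: Imz; rewrite z1 eqxx.
under eq_bigr do rewrite exprM.
have zetad5 : (zeta ^+ d) ^+ 5 = 1 by rewrite -exprM mulnC exprM zeta5 expr1n.
move: zetad5; rewrite zetaX_mod; have : (d %% 5 < 5)%N by rewrite ltn_pmod.
have := s1_gt0; have := s2_gt0.
case: (d %% 5)%N => [|[|[|[|[|r]]]]] //= s2_gt0 s1_gt0 _ z5.
- by rewrite expr0 !big_ord_recr big_ord0 /= !expr1n; ring.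
all: by apply: geometric => //; rewrite zetaXE /sin5 /= ?oppr_eq0 gt_eqF.
Qed.

Lemma c2E : c2 = - 1 / 2 - c1.
Proof.
have := congr1 Re (sum_zetaX 1).
by rewrite raddf_sum !big_ord_recr big_ord0 !zetaXE /cos5 /=; lra.
Qed.

Lemma c1_root : 4 * c1 ^+ 2 + 2 * c1 = 1.
Proof.
have : c2 = c1 ^+ 2 *+ 2 - 1.
  by rewrite (_ : angle5 2 = angle5 1 *+ 2) ?cos_mulr2n // /angle5; field.
by rewrite c2E; lra.
Qed.

Lemma sqrt5E : Num.sqrt 5 = 4 * c1 + 1.
Proof.
have := c1_gt0; have := c1_root => c1_root c1_gt0.
rewrite -(@ger0_norm _ (4 * c1 + 1)); last by lra.
by rewrite -sqrtr_sqr; congr Num.sqrt; lra.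
Qed.

Lemma s1_s2_sqr : s1 ^+ 2 + s2 ^+ 2 = 5 / 4.
Proof. by rewrite !sin2cos2 c2E; have := c1_root; lra. Qed.

End FifthRoots.

Section DiscreteFourier.
Variable R : realType.
Notation Re := (@complex.Re R).
Notation Im := (@complex.Im R).
Notation zeta := (@zeta R).
Implicit Types (u v w : C5 R).

Definition dft (k : nat) v : R[i] := \sum_(j < 5) (v 0 j)%:C * zeta ^+ (k * j).

Lemma dft_is_zmod_morphism k : zmod_morphism (dft k).
Proof.
move=> u v; rewrite /dft -sumrB; apply: eq_bigr => j _.
by rewrite !mxE rmorphB mulrBl.
Qed.

HB.instance Definition _ k :=
  GRing.isZmodMorphism.Build (C5 R) R[i] (dft k) (dft_is_zmod_morphism k).

Lemma dftZ k (c : R) v : dft k (c *: v) = c%:C * dft k v.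
Proof.
by rewrite /dft big_distrr; apply: eq_bigr => j _ /=; rewrite mxE rmorphM mulrA.
Qed.

Lemma Re_dft k v : Re (dft k v) = vk k v.
Proof.
by rewrite /dft raddf_sum; apply: eq_bigr => j _; rewrite [LHS]/= Re_realM zetaX.
Qed.

Lemma Im_dft k v : Im (dft k v) = vtk k v.
Proof.
by rewrite /dft raddf_sum; apply: eq_bigr => j _; rewrite [LHS]/= Im_realM zetaX.
Qed.

Lemma dft0 v : dft 0 v = (vplus v)%:C.
Proof.
by rewrite /dft /vplus rmorph_sum; apply: eq_bigr => j _; rewrite mul0n expr0 mulr1.
Qed.

Lemma dft_h5 k m : dft k (h5 R m) = zeta ^+ (k * m).
Proof.
rewrite /dft (bigD1 (Ordinal (ltn_pmod m (isT : (0 < 5)%N)))) //= big1.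
  by rewrite mxE eqxx mul1r addr0 zetaX_mod [RHS]zetaX_mod modnMmr.
move=> j /negbTE jm; rewrite mxE.
suff -> : (j == (m %% 5)%N :> nat) = false by rewrite mul0r.
by apply: contraFF jm => /eqP jm; apply/eqP/val_inj.
Qed.

Lemma dft_mul5 k u v : dft k (mul5 u v) = dft k u * dft k v.
Proof.
rewrite /mul5 raddf_sum [dft k u]/dft big_distrl; apply: eq_bigr => i _ /=.
rewrite raddf_sum [dft k v]/dft big_distrr; apply: eq_bigr => j _ /=.
by rewrite dftZ dft_h5 rmorphM mulnDr exprD; ring.
Qed.

Lemma dft_pow5 k w n : dft k (pow5 w n) = dft k w ^+ n.
Proof.
elim: n => [|n IH] /=; first by rewrite dft_h5 muln0 expr0.
by rewrite dft_mul5 IH exprS.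
Qed.

Lemma dft_exp5_partial k w N : dft k (exp5_partial w N) = cexp_series (dft k w) N.
Proof.
by rewrite /exp5_partial raddf_sum; apply: eq_bigr => n _ /=; rewrite dftZ dft_pow5.
Qed.

Lemma conjc_dft k v : (dft k v)^* = dft (4 * k) v.
Proof.
rewrite rmorph_sum; apply: eq_bigr => j _ /=.
by rewrite rmorphM /= conjc_zetaX mulnA oppr0.
Qed.

Lemma dft_mod k v : dft (k %% 5) v = dft k v.
Proof. by apply: eq_bigr => j _; rewrite zetaX_mod [in RHS]zetaX_mod modnMml. Qed.

Lemma dft_inversion v (m : 'I_5) :
  v 0 m = 5^-1 * Re (\sum_(k < 5) dft k v * zeta ^+ (k * (4 * m))).
Proof.
have orthogonality (j : 'I_5) : ((j + 4 * m) %% 5 == 0)%N = (j == m).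
  by case: j => [[|[|[|[|[|j]]]]] ?]; case: m => [[|[|[|[|[|m]]]]] ?].
suff -> : \sum_(k < 5) dft k v * zeta ^+ (k * (4 * m)) = (5 * v 0 m)%:C.
  by rewrite /= mulrA mulVf ?mul1r.
under eq_bigr do rewrite big_distrl.
rewrite exchange_big /=.
under eq_bigr => j _.
  rewrite (_ : \sum_(k < 5) _ = (v 0 j)%:C * \sum_(k < 5) zeta ^+ ((j + 4 * m) * k)).
    rewrite sum_zetaX orthogonality.
    over.
  by rewrite big_distrr; apply: eq_bigr => k _; rewrite -mulrA -exprD -mulnDr mulnC.
rewrite (bigD1 m) //= eqxx big1 => [|j /negbTE -> ]; last by rewrite mulr0.
by rewrite addr0 rmorphM rmorph_nat mulrC.
Qed.

Lemma dft_polar k v (phi : R) : 0 < rhok k v ->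
  cos phi = vk k v / rhok k v -> sin phi = vtk k v / rhok k v ->
  dft k v = (rhok k v * cos phi) +i* (rhok k v * sin phi).
Proof.
move=> rhok_gt0 cos_phi sin_phi.
apply/eqP; rewrite eq_complex Re_dft Im_dft cos_phi sin_phi.
by rewrite 2![rhok k v * _]mulrC !(divfK (lt0r_neq0 rhok_gt0)) !eqxx.
Qed.

Lemma exp5_dftE w v :
  (forall k, (k < 5)%N -> dft k v = cexp (dft k w)) -> exp5 w = v.
Proof.
move=> dft_v; apply/rowP => m; rewrite mxE; apply: cvg_lim => //.
under eq_fun do rewrite (dft_inversion _ m) raddf_sum.
rewrite [v 0 m]dft_inversion raddf_sum; apply: cvgMl_tmp.
apply: cvg_big => [|/= k _]; first exact: add_continuous.
have [cvg_Re cvg_Im] := cvg_cexp_series (dft k w).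
under eq_fun do rewrite dft_exp5_partial Re_mul.
by rewrite dft_v // Re_mul; apply: cvgB; apply: cvgMr_tmp.
Qed.

Lemma exp5_dft012E w v :
  (forall k, (k <= 2)%N -> dft k v = cexp (dft k w)) -> exp5 w = v.
Proof.
move=> dft_v; apply: exp5_dftE => k.
have dft_v_conj l : (l <= 2)%N -> dft (4 * l %% 5)%N v = cexp (dft (4 * l %% 5)%N w).
  by move=> l_le2; rewrite !dft_mod -!conjc_dft dft_v // conjc_cexp.
case: k => [|[|[|[|[|//]]]]] _; try exact: dft_v.
- exact: (dft_v_conj 2%N).
- exact: (dft_v_conj 1%N).
Qed.

End DiscreteFourier.

Section PolarExponent.
Variable R : realType.

Lemma dft_h5_1234 k :
  dft k (h5 R 1 + h5 R 2 + h5 R 3 + h5 R 4) = if (k %% 5 == 0)%N then 4 else -1.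
Proof.
have sum_h5 : \sum_(j < 5) h5 R j = h5 R 0 + (h5 R 1 + h5 R 2 + h5 R 3 + h5 R 4).
  by rewrite big_ord_recl !big_ord_recr big_ord0 /= add0r.
apply: (addrI (dft k (h5 R 0))); rewrite -raddfD -sum_h5 raddf_sum /=.
under eq_bigr do rewrite dft_h5.
by rewrite sum_zetaX dft_h5 muln0 expr0; case: ifP => _; ring.
Qed.

Definition psi_axis : C5 R :=
  ((Num.sqrt 5 + 1) / 10) *: (h5 R 1 + h5 R 4) - ((Num.sqrt 5 - 1) / 10) *: (h5 R 2 + h5 R 3).

Lemma dft_psi_axis :
  [/\ dft 0 psi_axis = (2 / 5)%:C, dft 1 psi_axis = (2 / 5)%:C
    & dft 2 psi_axis = (- 3 / 5)%:C].
Proof.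
have c2E := c2E R; have c1_root := c1_root R.
rewrite /psi_axis sqrt5E; split;
  rewrite raddfB !raddfD /= !dftZ !dft_h5 !zetaXE /cos5 /sin5 /=;
  by apply/eqP; rewrite eq_complex /=; apply/andP; split; apply/eqP; rewrite ?c2E; lra.
Qed.

Lemma dft_etilde k l : (k <= 2)%N -> (0 < l <= 2)%N ->
  dft k (etilde R l) = if k == l then 'i else 0.
Proof.
have -> : dft k (etilde R l) =
    \sum_(j < 5) (2 / 5 * sin5 R (l * j))%:C * (cos5 R (k * j) +i* sin5 R (k * j)).
  by rewrite raddf_sum; apply: eq_bigr => j _ /=; rewrite dftZ dft_h5 zetaXE sin_angle5.
have s1_s2_sqr := s1_s2_sqr R.
case: k => [|[|[|//]]] _; case: l => [|[|[|//]]] //= _;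
  rewrite !big_ord_recr big_ord0 /cos5 /sin5 /=;
  by apply/eqP; rewrite eq_complex /=; apply/andP; split; apply/eqP; lra.
Qed.

(* The exponent of the theorem, with A = ln (sqrt 2 / tan theta_+) / 5 and
   L = ln (tan psi_1). *)
Definition log5 (A L p1 p2 : R) : C5 R :=
  A *: (h5 R 1 + h5 R 2 + h5 R 3 + h5 R 4) + L *: psi_axis
  + p1 *: etilde R 1 + p2 *: etilde R 2.

Lemma dft_log5 A L p1 p2 :
  [/\ dft 0 (log5 A L p1 p2) = (4 * A + 2 / 5 * L) +i* 0,
      dft 1 (log5 A L p1 p2) = (- A + 2 / 5 * L) +i* p1
    & dft 2 (log5 A L p1 p2) = (- A - 3 / 5 * L) +i* p2].
Proof.
have [psi0 psi1 psi2] := dft_psi_axis.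
have dftE k : dft k (log5 A L p1 p2) =
    A%:C * dft k (h5 R 1 + h5 R 2 + h5 R 3 + h5 R 4) + L%:C * dft k psi_axis
    + p1%:C * dft k (etilde R 1) + p2%:C * dft k (etilde R 2).
  by rewrite 3!raddfD /= !dftZ.
split; rewrite dftE dft_h5_1234 ?psi0 ?psi1 ?psi2 !dft_etilde //=;
  by apply/eqP; rewrite eq_complex /=; apply/andP; split; apply/eqP; lra.
Qed.

End PolarExponent.

Lemma amplitude_moduli (R : realType) (V r1 r2 A L : R) :
  0 < V -> 0 < r1 -> 0 < r2 -> A = 5^-1 * ln (V / r1) -> L = ln (r1 / r2) ->
  let rho := powR (V * r1 ^+ 2 * r2 ^+ 2) 5^-1 in
  [/\ rho * expR (4 * A + 2 / 5 * L) = V, rho * expR (- A + 2 / 5 * L) = r1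
    & rho * expR (- A - 3 / 5 * L) = r2].
Proof.
move=> V_gt0 r1_gt0 r2_gt0 -> -> rho.
have pos (x : R) : 0 < x -> x \is Num.pos by rewrite posrE.
have rhoE : rho = expR (5^-1 * (ln V + ln r1 *+ 2 + ln r2 *+ 2)).
  rewrite /rho /powR gt_eqF ?mulr_gt0 ?exprn_gt0 //.
  by rewrite !lnM ?pos ?mulr_gt0 ?exprn_gt0 // !lnXn // mulrC.
rewrite rhoE !ln_div ?pos //.
by split; rewrite -expRD -[X in _ = X]lnK ?pos //; congr expR; field.
Qed.

Lemma ratio_gt0 (R : realFieldType) (a b : R) : 0 <= a -> 0 < a / b -> 0 < a /\ 0 < b.
Proof.
move=> a_ge0 ab_gt0; have a_gt0 : 0 < a.
  by rewrite lt_def a_ge0 andbT; apply: contraTneq ab_gt0 => ->; rewrite mul0r ltxx.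
by split => //; rewrite -(divKf (lt0r_neq0 a_gt0) b) divr_gt0.
Qed.

Lemma tan_gt0_pihalf (R : realType) (x : R) : 0 < x < pi / 2 -> 0 < tan x.
Proof.
move=> /andP[x_gt0 x_lt]; have pi_gt0 := pi_gt0 R.
by rewrite divr_gt0 // ?sin_gt0_pi ?cos_gt0_pihalf //; apply/andP; split; lra.
Qed.

Lemma polar_radii_gt0 (R : realType) (u : C5 R) (thp psi1 : R) :
  0 < thp < pi / 2 -> tan thp = Num.sqrt 2 * rhok 1 u / vplus u ->
  0 < psi1 < pi / 2 -> tan psi1 = rhok 1 u / rhok 2 u ->
  [/\ 0 < vplus u, 0 < rhok 1 u & 0 < rhok 2 u].
Proof.
move=> /tan_gt0_pihalf + tan_thp /tan_gt0_pihalf + tan_psi1.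
rewrite tan_thp tan_psi1 => /(ratio_gt0 (mulr_ge0 (sqrtr_ge0 2) (sqrtr_ge0 _))).
move=> [_ V_gt0] /(ratio_gt0 (sqrtr_ge0 _)) [r1_gt0 r2_gt0].
by split.
Qed.

Theorem mainTheorem6 (R : realType) (u : C5 R)
    (thp psi1 phi1 phi2 : R)
    (* theta_+ in [0,pi] with tan theta_+ = sqrt2 rho_1 / v_+, here in (0,pi/2) *)
    (Hth : 0 < thp < pi / 2)
    (Hthdef : tan thp = Num.sqrt 2 * rhok 1 u / vplus u)
    (* psi_1 in [0,pi/2] with tan psi_1 = rho_1/rho_2, here in (0,pi/2) *)
    (Hpsi : 0 < psi1 < pi / 2)
    (Hpsidef : tan psi1 = rhok 1 u / rhok 2 u)
    (* azimuthal angles phi_k in [0,2pi) *)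
    (Hphi1 : 0 <= phi1 < 2 * pi)
    (Hphi1c : cos phi1 = vk 1 u / rhok 1 u)
    (Hphi1s : sin phi1 = vtk 1 u / rhok 1 u)
    (Hphi2 : 0 <= phi2 < 2 * pi)
    (Hphi2c : cos phi2 = vk 2 u / rhok 2 u)
    (Hphi2s : sin phi2 = vtk 2 u / rhok 2 u) :
  u = rho5 u *: exp5
        ((5^-1 * ln (Num.sqrt 2 / tan thp)) *: (h5 R 1 + h5 R 2 + h5 R 3 + h5 R 4)
         + ln (tan psi1) *:
             (((Num.sqrt 5 + 1) / 10) *: (h5 R 1 + h5 R 4)
              - ((Num.sqrt 5 - 1) / 10) *: (h5 R 2 + h5 R 3))
         + phi1 *: etilde R 1 + phi2 *: etilde R 2).
Proof.
have [V_gt0 r1_gt0 r2_gt0] := polar_radii_gt0 Hth Hthdef Hpsi Hpsidef.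
set A := 5^-1 * _; set L := ln (tan psi1).
have A_def : A = 5^-1 * ln (vplus u / rhok 1 u).
  have sqrt2_gt0 : 0 < Num.sqrt 2 :> R by rewrite sqrtr_gt0.
  by rewrite /A Hthdef; congr (_ * ln _); field; rewrite !lt0r_neq0.
have L_def : L = ln (rhok 1 u / rhok 2 u) by rewrite /L Hpsidef.
have [e0 e1 e2] := amplitude_moduli V_gt0 r1_gt0 r2_gt0 A_def L_def.
rewrite -/(rho5 u) in e0 e1 e2.
have rho_neq0 : rho5 u != 0 by rewrite lt0r_neq0 // powR_gt0 // !mulr_gt0 // exprn_gt0.
suff -> : exp5 (log5 A L phi1 phi2) = (rho5 u)^-1 *: u.
  by rewrite scalerA divff ?scale1r.
have [w0 w1 w2] := dft_log5 A L phi1 phi2.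
apply: exp5_dft012E => -[|[|[|//]]] _; rewrite dftZ.
- by rewrite dft0 w0 -(cexp_polar 0 rho_neq0 e0) cos0 sin0 mulr1 mulr0.
- by rewrite (dft_polar r1_gt0 Hphi1c Hphi1s) w1 (cexp_polar _ rho_neq0 e1).
- by rewrite (dft_polar r2_gt0 Hphi2c Hphi2s) w2 (cexp_polar _ rho_neq0 e2).
Qed.
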